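(* Let $p$ be an odd prime and let $s$ be an integer with $0\le s\le \frac{p-1}{2}$. Then, modulo $[p]^2$, $$\sum_{k=0}^{\frac{p-1}{2}} \begin{bmatrix}2k\\k\end{bmatrix}_{q^2}^2 \begin{bmatrix}2k\\k+s\end{bmatrix}_{q^2} \frac{q^{2k}}{(-q^2;q^2)_k^2\,(-q;q)_{2k}^2} \equiv \begin{cases} (-1)^s q^{\frac{p-1}{2}-s^2} \begin{bmatrix}\frac{p-1}{2}\\ \frac{p-2s-1}{4}\end{bmatrix}_{q^4}^2 \dfrac{(q^2;q^2)_{\frac{p-2s-1}{2}}\,(q^2;q^2)_{\frac{p+2s-1}{2}}}{(q^4;q^4)_{\frac{p-1}{2}}^2}, & \text{if } s\equiv \frac{p-1}{2}\pmod 2,\\[2mm] 0, & \text{otherwise.}\end{cases}$$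
   Context: For an indeterminate $q$ and an integer $n\ge 0$: $(a;q)_0=1$ and $(a;q)_n=(1-a)(1-aq)\cdots(1-aq^{n-1})$. The $q$-binomial coefficient is $\begin{bmatrix}n\\k\end{bmatrix}_q=\frac{(q^{n-k+1};q)_k}{(q;q)_k}$ if $0\le k\le n$ and $0$ otherwise; if no base is indicated, the base is $q$. For a positive integer $p$, $[p]=\frac{1-q^p}{1-q}=1+q+\cdots+q^{p-1}$. For a prime $p$, $[p]$ is irreducible in $\mathbb{Q}[q]$; for rational functions $A,B$ of $q$ whose denominators are coprime to $[p]$, $A\equiv B\pmod{[p]^r}$ means that $A-B$, written in lowest terms, has numerator divisible by $[p]^r$ in $\mathbb{Q}[q]$. *)

From HB Require Import structures.
From mathcomp Require Import all_boot all_order all_algebra.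
From mathcomp Require Import fraction.
Set Implicit Arguments. Unset Strict Implicit. Unset Printing Implicit Defensive.
Import Order.TTheory GRing.Theory Num.Theory.
Local Open Scope ring_scope.

Notation RF := {fraction {poly rat}}.

Notation "x %:F" := (@FracField.tofrac _ x).

Definition qq : RF := ('X : {poly rat})%:F.

Definition qpoch (R : ringType) (a Q : R) (n : nat) : R :=
  \prod_(i < n) (1 - a * Q ^+ i).

Definition qbin (R : fieldType) (Q : R) (n k : nat) : R :=
  if (k <= n)%N then qpoch (Q ^+ (n - k + 1)) Q k / qpoch Q Q k else 0.

Definition qint (p : nat) : {poly rat} := \sum_(i < p) 'X ^+ i.

(* A == B (mod [p]^r) for rational functions: A - B times some polynomial
   denominator D coprime to [p] is [p]^r times a polynomial.  (Equivalent to
   "the numerator of A - B in lowest terms is divisible by [p]^r" when [p]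
   is irreducible.) *)
Definition qcong (p r : nat) (A B : RF) : Prop :=
  exists N D : {poly rat},
    coprimep D (qint p) /\ (A - B) * D%:F = ((qint p) ^+ r)%:F * N%:F.

(* Write Q = q^2 and n = (p-1)/2.  Splitting (Q;Q)_2k and (Q^2;Q^2)_k into (q;Q)_k,
   (-Q;Q)_k, (-q;q)_2k and (Q;Q)_k, the k-th summand becomes (q;Q)_k^2 W(s,k) with
   W(s,k) = [2k, k+s]_Q Q^k / (Q^2;Q^2)_k^2.  Factor by factor,
     (1 - q Q^i)^2 - (1 - Q^(i-n)) (1 - Q^(n+1+i)) = Q^(i-n) (q^p - 1)^2,
   so modulo [p]^2 the sum is S(n,s) = sum_k (Q^-n;Q)_k (Q^(n+1);Q)_k W(s,k); every
   denominator involved is a product of powers of q and of 1 - q^j with p not dividing j,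
   hence coprime to [p].  The terminating sum S(n,s) is evaluated exactly for all n >= s:
   a q-WZ pair gives a two-step recurrence in n, which carries the initial values S(s,s)
   and S(s+1,s) = 0 to the closed form, zero when n - s is odd. *)

From HB Require Import structures.
From mathcomp Require Import all_boot all_order all_algebra.
From mathcomp Require Import fraction.
From mathcomp Require Import ring zify.
Set Implicit Arguments. Unset Strict Implicit. Unset Printing Implicit Defensive.
Import Order.TTheory GRing.Theory Num.Theory.
Local Open Scope ring_scope.

Section QPochhammer.
Variable R : comNzRingType.
Implicit Types a Q : R.

Lemma qpoch0 a Q : qpoch a Q 0 = 1.
Proof. by rewrite /qpoch big_ord0. Qed.

Lemma qpochS a Q n : qpoch a Q n.+1 = qpoch a Q n * (1 - a * Q ^+ n).
Proof. by rewrite /qpoch big_ord_recr. Qed.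

Lemma qpochSl a Q n : qpoch a Q n.+1 = (1 - a) * qpoch (a * Q) Q n.
Proof.
rewrite /qpoch big_ord_recl /= expr0 mulr1; congr (_ * _).
by apply: eq_bigr => i _; rewrite /bump /= add1n exprS mulrA.
Qed.

Lemma qpochD a Q m n : qpoch a Q (m + n) = qpoch a Q m * qpoch (a * Q ^+ m) Q n.
Proof.
elim: n => [|n IH]; first by rewrite addn0 qpoch0 mulr1.
by rewrite addnS !qpochS IH exprD !mulrA.
Qed.

Lemma qpoch_eq0 a Q n i : (i < n)%N -> a * Q ^+ i = 1 -> qpoch a Q n = 0.
Proof. by move=> lt_in h; rewrite /qpoch (bigD1 (Ordinal lt_in)) //= h subrr mul0r. Qed.

Lemma qpochSS a Q n :
  qpoch a Q n * (1 - a * Q ^+ n) * (1 - a * Q ^+ n.+1) =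
  (1 - a) * (1 - a * Q) * qpoch (a * Q * Q) Q n.
Proof. by rewrite -!qpochS !qpochSl mulrA. Qed.

End QPochhammer.

Definition qgeneric (F : fieldType) (Q : F) :=
  Q != 0 /\ forall j, (0 < j)%N -> Q ^+ j != 1.

Section GenericBase.
Variables (F : fieldType) (Q : F).
Hypothesis gQ : qgeneric Q.

Lemma qgenericX j : (0 < j)%N -> qgeneric (Q ^+ j).
Proof.
case: gQ => Q0 Qj j0; split; first by rewrite expf_neq0.
by move=> i i0; rewrite -exprM; apply: Qj; rewrite muln_gt0 j0.
Qed.

Lemma expQ_neq0 j : Q ^+ j != 0.
Proof. by rewrite expf_neq0 //; case: gQ. Qed.

Lemma subr1Q_neq0 j : (0 < j)%N -> 1 - Q ^+ j != 0.
Proof. by case: gQ => _ Qj j0; rewrite subr_eq0 eq_sym Qj. Qed.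

Lemma subrQ1_neq0 j : (0 < j)%N -> Q ^+ j - 1 != 0.
Proof. by case: gQ => _ Qj j0; rewrite subr_eq0 Qj. Qed.

Lemma subrQQ_neq0 i j : (i < j)%N -> Q ^+ i - Q ^+ j != 0.
Proof.
move=> lt_ij; rewrite -(subnKC (ltnW lt_ij)) exprD -{1}[Q ^+ i]mulr1 -mulrBr.
by rewrite mulf_neq0 ?expQ_neq0 ?subr1Q_neq0 ?subn_gt0.
Qed.

Lemma subrXQ_neq0 j : (1 < j)%N -> Q ^+ j - Q != 0.
Proof. by move=> lt1j; rewrite -{2}(expr1 Q) -opprB oppr_eq0 subrQQ_neq0. Qed.

Lemma addr1Q_neq0 j : (0 < j)%N -> 1 + Q ^+ j != 0.
Proof.
case: gQ => _ Qj j0; rewrite addrC addr_eq0; apply/eqP => Qj_eqN1.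
by have := Qj (j * 2)%N; rewrite muln_gt0 j0 exprM Qj_eqN1 sqrrN expr1n eqxx => /(_ isT).
Qed.

Lemma qpochQQ_neq0 m : qpoch Q Q m != 0.
Proof. by apply/prodf_neq0 => i _; rewrite -exprS subr1Q_neq0. Qed.

Lemma qbinE N K : (K <= N)%N ->
  qbin Q N K = qpoch Q Q N / (qpoch Q Q K * qpoch Q Q (N - K)).
Proof.
move=> le_KN; rewrite /qbin le_KN.
have -> : qpoch Q Q N = qpoch Q Q (N - K) * qpoch (Q ^+ (N - K + 1)) Q K.
  by rewrite -{1}(subnK le_KN) qpochD -exprS addn1.
have := qpochQQ_neq0 (N - K); have := qpochQQ_neq0 K.
by move: (qpoch Q Q K) (qpoch Q Q (N - K)) => x y x0 y0; field; rewrite x0 y0.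
Qed.

End GenericBase.

Lemma qbin_gt (F : fieldType) (Q : F) N K : (N < K)%N -> qbin Q N K = 0.
Proof. by move=> h; rewrite /qbin leqNgt h. Qed.

Section WZPair.
Variables (F : fieldType) (Q : F).

Definition binw s k :=
  qbin Q (2 * k) (k + s) * Q ^+ k / qpoch (Q ^+ 2) (Q ^+ 2) k ^+ 2.

Definition summand n s k :=
  qpoch (Q ^+ n)^-1 Q k * qpoch (Q ^+ n.+1) Q k * binw s k.

Definition qsum n s := \sum_(k < n.+1) summand n s k.

(* The rational certificate of the q-WZ pair in (n, k), as a function of
   a = Q^n, b = Q^s and x = Q^k. *)
Definition cert_ratio (a b x : F) :=
  (Q ^+ 3 * a ^+ 2 - 1) / (Q * a) * ((1 - x ^+ 2) * (1 - x * b) * (1 - x / b))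
  / (x * (1 - (a * Q)^-1) * (1 - (a * Q ^+ 2)^-1)).

Definition cert_weight n s k :=
  qpoch (Q ^+ n.+2)^-1 Q k * qpoch (Q ^+ n.+1) Q k * binw s k.

Definition cert n s k :=
  cert_weight n s k * cert_ratio (Q ^+ n) (Q ^+ s) (Q ^+ k).

Definition rec_lead n s := (1 - Q ^+ 2 * Q ^+ n / Q ^+ s) * (1 - Q ^+ 2 * Q ^+ n * Q ^+ s).

Definition rec_tail n s := Q * (1 - Q * Q ^+ n / Q ^+ s) * (1 - Q * Q ^+ n * Q ^+ s).

Lemma binw_lt s k : (k < s)%N -> binw s k = 0.
Proof. by move=> lt_ks; rewrite /binw qbin_gt ?mul0r // mul2n -addnn ltn_add2l. Qed.

Lemma cert_ratio_root a b : b != 0 -> cert_ratio a b b = 0.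
Proof. by move=> b0; rewrite /cert_ratio divff // subrr !mulr0 mul0r. Qed.

Lemma cert_ratio1 a b : cert_ratio a b 1 = 0.
Proof. by rewrite /cert_ratio expr1n subrr !mul0r mulr0 mul0r. Qed.

Lemma cert_ratio_identity a b x :
  Q != 0 -> a != 0 -> b != 0 -> x != 0 ->
  1 - Q * a != 0 -> 1 - Q ^+ 2 * a != 0 -> a * Q - 1 != 0 -> a * Q ^+ 2 - 1 != 0 ->
  1 - Q * x * b != 0 -> b - Q * x != 0 -> 1 - Q ^+ 2 * x ^+ 2 != 0 ->
  (1 - Q ^+ 2 * a / b) * (1 - Q ^+ 2 * a * b) *
    ((1 - Q * a * x) * (1 - Q ^+ 2 * a * x) / ((1 - Q * a) * (1 - Q ^+ 2 * a)))
  - Q * (1 - Q * a / b) * (1 - Q * a * b) *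
    ((1 - (a * Q ^+ 2)^-1 * x) * (1 - (a * Q ^+ 2)^-1 * (x * Q))
       / ((1 - (a * Q ^+ 2)^-1) * (1 - (a * Q ^+ 2)^-1 * Q)))
  = (1 - (a * Q ^+ 2)^-1 * x) * (1 - a * Q * x) *
    ((1 - Q * x ^+ 2) * (1 - Q ^+ 2 * x ^+ 2) * Q /
       ((1 - Q * x * b) * (1 - Q * x / b) * (1 - Q ^+ 2 * x ^+ 2) ^+ 2))
    * cert_ratio a b (Q * x) - cert_ratio a b x.
Proof.
move=> *; rewrite /cert_ratio; field.
by rewrite exprMn; repeat (apply/andP; split).
Qed.

Hypothesis gQ : qgeneric Q.

Ltac qneq0 :=
  repeat (apply/andP; split); try done;
  try (by apply: qpochQQ_neq0); try (by apply: expQ_neq0);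
  try (by apply: (qpochQQ_neq0 (qgenericX gQ _)));
  try (by apply: subrXQ_neq0);
  try (by rewrite -exprS subrQQ_neq0 ?ltnS);
  try (by rewrite -exprM -exprD subr1Q_neq0);
  try (by rewrite -?exprS -?exprSr -?exprD; apply: subr1Q_neq0; rewrite ?addnS);
  try (by rewrite -?exprS -?exprSr -?exprD; apply: subrQ1_neq0; rewrite ?addnS).

Let Q_neq0 : Q != 0. Proof. by case: gQ. Qed.

Lemma summandSS_cert_weight n s k :
  summand n.+2 s k = cert_weight n s k *
    ((1 - Q * Q ^+ n * Q ^+ k) * (1 - Q ^+ 2 * Q ^+ n * Q ^+ k)
     / ((1 - Q * Q ^+ n) * (1 - Q ^+ 2 * Q ^+ n))).
Proof.
have ne_Qn1 : 1 - Q ^+ n.+1 != 0 by apply: subr1Q_neq0.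
have ne_Qn2 : 1 - Q ^+ n.+1 * Q != 0 by rewrite -exprSr; apply: subr1Q_neq0.
rewrite /summand /cert_weight.
have -> : qpoch (Q ^+ n.+3) Q k = qpoch (Q ^+ n.+1) Q k * (1 - Q ^+ n.+1 * Q ^+ k)
    * (1 - Q ^+ n.+1 * Q ^+ k.+1) / ((1 - Q ^+ n.+1) * (1 - Q ^+ n.+1 * Q)).
  by rewrite qpochSS -!exprSr; field; rewrite -exprSr in ne_Qn2; rewrite ne_Qn1 ne_Qn2.
rewrite (exprS Q n) (exprS Q k) !mulrA.
move: ne_Qn1 ne_Qn2; rewrite (exprS Q n) => ne_Qn1 ne_Qn2.
by field; qneq0.
Qed.

Lemma summand_cert_weight n s k :
  summand n s k = cert_weight n s k *
    ((1 - (Q ^+ n * Q ^+ 2)^-1 * Q ^+ k) * (1 - (Q ^+ n * Q ^+ 2)^-1 * (Q ^+ k * Q))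
     / ((1 - (Q ^+ n * Q ^+ 2)^-1) * (1 - (Q ^+ n * Q ^+ 2)^-1 * Q))).
Proof.
have Qn0 := expQ_neq0 gQ n.
have qpochSS_inv := qpochSS (Q ^+ n * Q ^+ 2)^-1 Q k.
rewrite (_ : (Q ^+ n * Q ^+ 2)^-1 * Q * Q = (Q ^+ n)^-1) in qpochSS_inv; last by field; qneq0.
have ne_Qn2 : 1 - (Q ^+ n * Q ^+ 2)^-1 != 0.
  by rewrite -exprD subr_eq0 eq_sym invr_eq1 -subr_eq0 subrQ1_neq0 // addn2.
have ne_Qn1 : 1 - (Q ^+ n * Q ^+ 2)^-1 * Q != 0.
  have -> : (Q ^+ n * Q ^+ 2)^-1 * Q = (Q ^+ n.+1)^-1.
    by rewrite (exprS Q n); field; rewrite Qn0 Q_neq0.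
  by rewrite subr_eq0 eq_sym invr_eq1 -subr_eq0 subrQ1_neq0.
rewrite /summand /cert_weight.
have -> : qpoch (Q ^+ n)^-1 Q k = qpoch (Q ^+ n * Q ^+ 2)^-1 Q k
    * (1 - (Q ^+ n * Q ^+ 2)^-1 * Q ^+ k) * (1 - (Q ^+ n * Q ^+ 2)^-1 * Q ^+ k.+1)
    / ((1 - (Q ^+ n * Q ^+ 2)^-1) * (1 - (Q ^+ n * Q ^+ 2)^-1 * Q)).
  by rewrite qpochSS_inv; field; qneq0.
rewrite -exprD addn2 (exprSr Q k).
by field; qneq0.
Qed.

Lemma binw_step s k : (s <= k)%N ->
  binw s k.+1 = binw s k *
   ((1 - Q * (Q ^+ k) ^+ 2) * (1 - Q ^+ 2 * (Q ^+ k) ^+ 2) * Q /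
       ((1 - Q * Q ^+ k * Q ^+ s) * (1 - Q * Q ^+ k / Q ^+ s) * (1 - Q ^+ 2 * (Q ^+ k) ^+ 2) ^+ 2)).
Proof.
move=> le_sk.
have le1 : (k + s <= 2 * k)%N by rewrite mul2n -addnn leq_add2l.
have le2 : (k.+1 + s <= 2 * k.+1)%N by rewrite mul2n -addnn leq_add2l (leqW le_sk).
rewrite /binw (qbinE gQ le1) (qbinE gQ le2).
have -> : (2 * k.+1 = (2 * k).+2)%N by rewrite mulnS.
have -> : (k.+1 + s = (k + s).+1)%N by rewrite addSn.
have -> : ((2 * k).+2 - (k + s).+1 = (k - s).+1)%N by lia.
have -> : (2 * k - (k + s) = k - s)%N by lia.
rewrite !qpochS exprS.
have -> : Q ^+ (2 * k) = (Q ^+ k) ^+ 2 by rewrite mulnC exprM.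
have -> : Q ^+ (k - s) = Q ^+ k / Q ^+ s.
  by rewrite -{2}(subnK le_sk) exprD mulfK ?expQ_neq0.
rewrite exprD exprAC (exprS Q k).
have ne_bx : Q ^+ s - Q * Q ^+ k != 0 by rewrite -exprS subrQQ_neq0.
have ne_xb : 1 - Q * Q ^+ k * Q ^+ s != 0 by rewrite -exprS -exprD subr1Q_neq0.
have ne_x2 : 1 - (Q * Q ^+ k) ^+ 2 != 0 by rewrite -exprS -exprM subr1Q_neq0.
have ne_Qx2 : 1 - Q ^+ 2 * (Q ^+ 2) ^+ k != 0 by rewrite -exprM -exprD subr1Q_neq0.
have := qpochQQ_neq0 gQ (2 * k); have := qpochQQ_neq0 gQ (k + s).
have := qpochQQ_neq0 gQ (k - s); have := qpochQQ_neq0 (qgenericX gQ (isT : 0 < 2)%N) k.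
move: ne_xb ne_bx ne_x2 (expQ_neq0 gQ k) (expQ_neq0 gQ s).
move: (Q ^+ k) (Q ^+ s) (qpoch Q Q (2 * k)) (qpoch Q Q (k + s)) (qpoch Q Q (k - s)).
move: (qpoch (Q ^+ 2) (Q ^+ 2) k) => P x b P1 P2 P3 ne_xb ne_bx ne_x2 x0 b0 P0 P30 P20 P10.
by field; qneq0.
Qed.

Lemma cert_weight_step n s k : (s <= k)%N ->
  cert_weight n s k.+1 = cert_weight n s k *
   ((1 - (Q ^+ n * Q ^+ 2)^-1 * Q ^+ k) * (1 - Q ^+ n * Q * Q ^+ k) *
    ((1 - Q * (Q ^+ k) ^+ 2) * (1 - Q ^+ 2 * (Q ^+ k) ^+ 2) * Q /
       ((1 - Q * Q ^+ k * Q ^+ s) * (1 - Q * Q ^+ k / Q ^+ s)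
        * (1 - Q ^+ 2 * (Q ^+ k) ^+ 2) ^+ 2))).
Proof.
move=> le_sk; rewrite /cert_weight !qpochS (binw_step le_sk).
by rewrite -(exprD Q n 2) addn2 (exprSr Q n); ring.
Qed.

Lemma summand_telescope n s k :
  rec_lead n s * summand n.+2 s k - rec_tail n s * summand n s k
  = cert n s k.+1 - cert n s k.
Proof.
have [lt_ks | le_sk] := ltnP k s.
  have cert_k1 : cert n s k.+1 = 0.
    have [lt_k1s | le_sk1] := ltnP k.+1 s.
      by rewrite /cert /cert_weight binw_lt ?mulr0 ?mul0r.
    have -> : k.+1 = s by apply/anti_leq/andP.
    by rewrite /cert cert_ratio_root ?mulr0 ?expQ_neq0.
  by rewrite cert_k1 /summand /cert /cert_weight !binw_lt // !mulr0 mul0r subrr.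
rewrite summandSS_cert_weight summand_cert_weight /cert (cert_weight_step n le_sk) (exprS Q k).
set V := cert_weight n s k.
have scaleV (c2 c0 r1 r0 t g1 g0 : F) : c2 * r1 - c0 * r0 = t * g1 - g0 ->
    c2 * (V * r1) - c0 * (V * r0) = V * t * g1 - V * g0.
  by move=> e; transitivity (V * (c2 * r1 - c0 * r0)); [ring | rewrite e; ring].
by apply: scaleV; apply: cert_ratio_identity; qneq0.
Qed.

Lemma summand_gt n s k : (n < k)%N -> summand n s k = 0.
Proof. by move=> lt_nk; rewrite /summand (qpoch_eq0 lt_nk) ?mul0r ?mulVf ?expQ_neq0. Qed.

Lemma qsum_rec n s : rec_lead n s * qsum n.+2 s = rec_tail n s * qsum n s.
Proof.
apply/eqP; rewrite -subr_eq0; apply/eqP.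
have -> : qsum n s = \sum_(k < n.+3) summand n s k.
  by rewrite 2!big_ord_recr /= !summand_gt ?addr0.
rewrite /qsum !mulr_sumr -sumrB; under eq_bigr => k _ do rewrite summand_telescope.
rewrite -(big_mkord xpredT (fun k => cert n s k.+1 - cert n s k)) telescope_sumr //.
rewrite /cert /cert_weight cert_ratio1 mulr0 subr0.
by rewrite (@qpoch_eq0 _ _ _ _ n.+2) ?mul0r ?mulVf ?expQ_neq0.
Qed.

Lemma rec_lead_neq0 n s : (s < n.+2)%N -> rec_lead n s != 0.
Proof.
move=> lt_sn; rewrite /rec_lead mulf_neq0 -?exprD ?subr1Q_neq0 //.
by rewrite add2n -(subnK (ltnW lt_sn)) exprD mulfK ?expQ_neq0 ?subr1Q_neq0 ?subn_gt0.
Qed.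

Lemma qsum_lt n s : (n < s)%N -> qsum n s = 0.
Proof.
move=> lt_ns; rewrite /qsum big1 // => k _.
by rewrite /summand binw_lt ?mulr0 // (leq_trans (ltn_ord k)).
Qed.

Lemma qsum_subdiag s : qsum s.+1 s = 0.
Proof.
case: s => [|s].
  rewrite /qsum !big_ord_recr big_ord0 /= /summand /binw /qbin /= !qpochS !qpoch0.
  have Q1 : 1 - Q != 0 by rewrite -[Q]expr1 subr1Q_neq0.
  have Q2 : 1 - Q ^+ 2 != 0 by rewrite subr1Q_neq0.
  by rewrite !expr0 expr1 expr1n; field; rewrite Q1 Q2 Q_neq0 oner_neq0.
have := qsum_rec s s.+1; rewrite (qsum_lt (ltnSn s)) mulr0 => /eqP.
by rewrite mulf_eq0 (negPf (rec_lead_neq0 _)) //= => /eqP.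
Qed.

End WZPair.

Section ClosedForm.
Variables (F : fieldType) (q0 : F).
Hypothesis gq0 : qgeneric q0.
Local Notation Q := (q0 ^+ 2).

Let gQ : qgeneric Q := qgenericX gq0 (isT : 0 < 2)%N.
Let q0X_neq0 j : q0 ^+ j != 0 := expQ_neq0 gq0 j.

Definition closed_form n s :=
  (-1) ^+ s * (q0 ^+ n / q0 ^+ (s * s)) * qbin (q0 ^+ 4) n ((n - s) %/ 2) ^+ 2
  * (qpoch Q Q (n - s) * qpoch Q Q (n + s)) / qpoch (q0 ^+ 4) (q0 ^+ 4) n ^+ 2.

Lemma qpoch_invX s :
  qpoch (Q ^+ s)^-1 Q s * q0 ^+ (s * s) * q0 ^+ s = (-1) ^+ s * qpoch Q Q s.
Proof.
elim: s => [|s IH]; first by rewrite !qpoch0 !expr0 !mulr1.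
rewrite qpochSl qpochS -exprS.
have -> : (Q ^+ s.+1)^-1 * Q = (Q ^+ s)^-1 by rewrite exprSr invfM mulfVK ?q0X_neq0.
rewrite -mulrA.
have -> : q0 ^+ (s.+1 * s.+1) * q0 ^+ s.+1 = q0 ^+ (s * s) * q0 ^+ s * Q ^+ s.+1.
  by rewrite -exprM -!exprD; congr (_ ^+ _); lia.
have -> : qpoch (Q ^+ s)^-1 Q s = (-1) ^+ s * qpoch Q Q s / (q0 ^+ (s * s) * q0 ^+ s).
  by rewrite -IH; field; rewrite !q0X_neq0.
rewrite [(-1) ^+ s.+1]exprS; move: (expQ_neq0 gQ s.+1) (qpoch Q Q s).
by move: (Q ^+ s.+1) => X X0 P; field; rewrite X0 !q0X_neq0.
Qed.

Lemma closed_form_rec n s : (s <= n)%N -> ~~ odd (n - s) ->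
  rec_lead Q n s * closed_form n.+2 s = rec_tail Q n s * closed_form n s.
Proof.
move=> le_sn even_ns.
have gR : qgeneric (q0 ^+ 4) := qgenericX gq0 (isT : 0 < 4)%N.
set m := ((n - s) %/ 2)%N.
have m2 : (m * 2 = n - s)%N by rewrite /m divnK // dvdn2.
have le_mn : (m <= n)%N by lia.
rewrite /closed_form -/m.
have -> : ((n.+2 - s) %/ 2 = m.+1)%N by rewrite /m; lia.
rewrite (qbinE gR le_mn) (qbinE gR (_ : m.+1 <= n.+2)%N); last by lia.
rewrite subSS (subSn le_mn) (subSn (leqW le_sn)) (subSn le_sn) !addSn !qpochS.
have -> : q0 ^+ 4 = Q ^+ 2 by rewrite -exprM.
have -> : q0 ^+ n.+2 = q0 ^+ n * Q by rewrite -exprD addn2.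
have Q_ns : Q ^+ (n - s) = Q ^+ n / Q ^+ s.
  by rewrite -{2}(subnK le_sn) exprD mulfK ?expQ_neq0.
have -> : (Q ^+ 2) ^+ m = Q ^+ n / Q ^+ s by rewrite -exprM mulnC m2.
have -> : (Q ^+ 2) ^+ (n - m) = Q ^+ n * Q ^+ s by rewrite -exprM -exprD; congr (_ ^+ _); lia.
rewrite (exprS (Q ^+ 2) n) (exprS Q (n - s)) (exprS Q (n + s)) Q_ns exprD /rec_lead /rec_tail.
have gQ2 : qgeneric (Q ^+ 2) := qgenericX gQ (isT : 0 < 2)%N.
move: (qpochQQ_neq0 gQ2 n) (qpochQQ_neq0 gQ2 m) (qpochQQ_neq0 gQ2 (n - m)).
move=> P0 Pm0 Pnm0; field; repeat (apply/andP; split) => //.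
all: rewrite -?exprM -?exprD ?expQ_neq0 ?subr1Q_neq0 ?subrQQ_neq0 //; lia.
Qed.

Lemma qsum_diag s : qsum Q s s = closed_form s s.
Proof.
rewrite /qsum big_ord_recr big1 /= => [|k _]; last by rewrite /summand binw_lt ?mulr0.
rewrite add0r /summand /binw /closed_form subnn div0n.
have -> : qbin Q (2 * s) (s + s) = 1.
  by rewrite addnn -mul2n /qbin leqnn subnn add0n expr1 divff ?qpochQQ_neq0.
have -> : qbin (q0 ^+ 4) s 0 = 1 by rewrite /qbin !qpoch0 divr1.
have -> : q0 ^+ 4 = Q ^+ 2 by rewrite -exprM.
rewrite qpoch0 addnn -addnn qpochD -exprS.
have -> : qpoch (Q ^+ s)^-1 Q s = (-1) ^+ s * qpoch Q Q s / (q0 ^+ (s * s) * q0 ^+ s).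
  by rewrite -qpoch_invX; field; rewrite !q0X_neq0.
have -> : Q ^+ s = q0 ^+ s * q0 ^+ s by rewrite exprAC expr2.
have := qpochQQ_neq0 (qgenericX gQ (isT : 0 < 2)%N) s.
by move: (qpoch (Q ^+ 2) (Q ^+ 2) s) => P P0; field; rewrite P0 !q0X_neq0.
Qed.

Lemma qsum_closed_form n s : (s <= n)%N ->
  qsum Q n s = if odd s == odd n then closed_form n s else 0.
Proof.
elim/ltn_ind: n => n IH; rewrite leq_eqVlt => /predU1P[<- | ].
  by rewrite eqxx qsum_diag.
rewrite leq_eqVlt => /predU1P[<- | ].
  by rewrite qsum_subdiag /=; case: (odd s).
case: n IH => [|[|m]] // IH; rewrite !ltnS => le_sm.
have lead0 : rec_lead Q m s != 0 by rewrite rec_lead_neq0 // ltnS ltnW.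
rewrite -(mulKf lead0 (qsum Q m.+2 s)) (qsum_rec gQ) IH //= negbK.
case: eqP => [par_sm | _]; last by rewrite !mulr0.
by rewrite -closed_form_rec ?mulKf ?oddB ?par_sm ?addbb.
Qed.

End ClosedForm.

Lemma mulX1_qint p : ('X - 1) * qint p = 'X^p - 1.
Proof.
rewrite /qint; elim: p => [|p IH]; first by rewrite big_ord0 mulr0 expr0 subrr.
by rewrite big_ord_recr /= mulrDr IH exprS; ring.
Qed.

Lemma qint_root1 p : (0 < p)%N -> ~~ root (qint p) 1.
Proof.
move=> p0; rewrite /root /qint horner_sum.
under eq_bigr => i _ do rewrite hornerXn expr1n.
by rewrite sumr_const card_ord pnatr_eq0 -lt0n.
Qed.

Lemma coprimep_X_qint p : (0 < p)%N -> coprimep 'X (qint p).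
Proof.
move=> p0; rewrite coprimep_sym -['X]subr0 -polyC0 coprimep_XsubC /root /qint horner_sum.
rewrite -(prednK p0) big_ord_recl /= expr0 hornerC big1 ?addr0 ?oner_eq0 //.
by move=> i _; rewrite hornerXn expr0n.
Qed.

Lemma dvdp_XnsubX (d : {poly rat}) m a : d %| 'X^m - 1 -> d %| 'X^(a * m) - 1.
Proof.
move=> dvd_dm; apply: (dvdp_trans dvd_dm).
by have := subrXX ('X^m : {poly rat}) 1 a; rewrite expr1n -exprM mulnC => ->; apply: dvdp_mulIl.
Qed.

(* Bezout in the exponents: [d | X^m - 1] and [d | X^p - 1] force [d | X - 1]. *)
Lemma coprimep_Xn1_qint p m : prime p -> ~~ (p %| m)%N ->
  coprimep ('X^m - 1 : {poly rat}) (qint p).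
Proof.
move=> p_pr p_ndvd_m.
have [a _ bez] := Bezoutl m (prime_gt0 p_pr).
have gcd1 : gcdn p m = 1%N by apply/eqP; rewrite -/(coprime p m) prime_coprime.
rewrite gcd1 in bez; set v := ((1 + a * m) %/ p)%N.
have bezE : (1 + a * m = v * p)%N by rewrite /v divnK.
have cop1 : coprimep ('X - 1 : {poly rat}) (qint p).
  by rewrite coprimep_sym -polyC1 coprimep_XsubC qint_root1 ?prime_gt0.
apply/coprimepP => d dvd_dm dvd_dp.
have dvd_dXp : d %| 'X^p - 1 by rewrite -mulX1_qint dvdp_mull.
have : d %| 'X - 1.
  have -> : ('X - 1 : {poly rat}) = ('X^(v * p) - 1) - 'X * ('X^(a * m) - 1).
    by rewrite -bezE exprS; ring.
  by rewrite dvdp_sub ?dvdp_mull ?dvdp_XnsubX.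
by move=> dvd_dX1; move/coprimepP: cop1; apply.
Qed.

Definition pintegral p (x : RF) :=
  exists N D : {poly rat}, coprimep D (qint p) /\ x * D%:F = N%:F.

Definition pcong p r (A B : RF) :=
  exists2 z, pintegral p z & A - B = ((qint p) ^+ r)%:F * z.

Section PIntegral.
Variable p : nat.

Lemma pintegral_poly P : pintegral p P%:F.
Proof. by exists P, 1; rewrite coprime1p tofrac1 mulr1. Qed.

Lemma pintegral0 : pintegral p 0.
Proof. by rewrite -tofrac0; apply: pintegral_poly. Qed.

Lemma pintegral1 : pintegral p 1.
Proof. by rewrite -tofrac1; apply: pintegral_poly. Qed.

Lemma pintegralD x y : pintegral p x -> pintegral p y -> pintegral p (x + y).
Proof.
move=> [N1 [D1 [c1 e1]]] [N2 [D2 [c2 e2]]].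
exists (N1 * D2 + N2 * D1), (D1 * D2); split; first by rewrite coprimepMl c1 c2.
by rewrite tofracD !tofracM -e1 -e2; ring.
Qed.

Lemma pintegralN x : pintegral p x -> pintegral p (- x).
Proof. by move=> [N [D [c e]]]; exists (- N), D; rewrite tofracN -e mulNr. Qed.

Lemma pintegralB x y : pintegral p x -> pintegral p y -> pintegral p (x - y).
Proof. by move=> px py; apply/pintegralD/pintegralN. Qed.

Lemma pintegralM x y : pintegral p x -> pintegral p y -> pintegral p (x * y).
Proof.
move=> [N1 [D1 [c1 e1]]] [N2 [D2 [c2 e2]]].
exists (N1 * N2), (D1 * D2); split; first by rewrite coprimepMl c1 c2.
by rewrite !tofracM -e1 -e2; ring.
Qed.

Lemma pintegralX x j : pintegral p x -> pintegral p (x ^+ j).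
Proof.
move=> px; elim: j => [|j IH]; first by rewrite expr0; apply: pintegral1.
by rewrite exprS; apply: pintegralM.
Qed.

Lemma pintegral_prod (I : Type) (r : seq I) (P : pred I) (f : I -> RF) :
  (forall i, P i -> pintegral p (f i)) -> pintegral p (\prod_(i <- r | P i) f i).
Proof. exact: (big_ind (pintegral p) pintegral1 pintegralM). Qed.

Lemma pintegral_inv D : coprimep D (qint p) -> D != 0 -> pintegral p (D%:F)^-1.
Proof. by move=> cop D0; exists 1, D; rewrite mulVf ?tofrac1 ?tofrac_eq0. Qed.

Lemma pcong_qcong r A B : pcong p r A B -> qcong p r A B.
Proof. by move=> [z [N [D [cop eN]]] eAB]; exists N, D; rewrite eAB -mulrA eN. Qed.

Lemma pcong_refl r A : pcong p r A A.
Proof. by exists 0; [exact: pintegral0 | rewrite subrr mulr0]. Qed.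

Lemma pcongD r A B C D :
  pcong p r A B -> pcong p r C D -> pcong p r (A + C) (B + D).
Proof.
move=> [z1 pz1 e1] [z2 pz2 e2]; exists (z1 + z2); first exact: pintegralD.
by rewrite mulrDr -e1 -e2; ring.
Qed.

Lemma pcong_sum r (I : Type) (s : seq I) (P : pred I) (f g : I -> RF) :
  (forall i, P i -> pcong p r (f i) (g i)) ->
  pcong p r (\sum_(i <- s | P i) f i) (\sum_(i <- s | P i) g i).
Proof. exact: (big_ind2 (pcong p r) (pcong_refl r 0) (@pcongD r)). Qed.

Lemma pcongMr r A B c : pintegral p c -> pcong p r A B -> pcong p r (A * c) (B * c).
Proof.
move=> pc [z pz e]; exists (z * c); first exact: pintegralM.
by rewrite -mulrBl e mulrA.
Qed.

(* [A C - B D = (A - B) C + B (C - D)] *)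
Lemma pcongM r A B C D : pintegral p B -> pintegral p C ->
  pcong p r A B -> pcong p r C D -> pcong p r (A * C) (B * D).
Proof.
move=> pB pC [z1 pz1 e1] [z2 pz2 e2].
exists (z1 * C + B * z2); first by apply: pintegralD; apply: pintegralM.
by rewrite mulrDr !mulrA -e1 (mulrC _ B) -mulrA -e2; ring.
Qed.

Lemma pcong_prod r (I : Type) (s : seq I) (P : pred I) (f g : I -> RF) :
  (forall i, P i -> [/\ pintegral p (f i), pintegral p (g i) & pcong p r (f i) (g i)]) ->
  pcong p r (\prod_(i <- s | P i) f i) (\prod_(i <- s | P i) g i).
Proof.
pose K A B := [/\ pintegral p A, pintegral p B & pcong p r A B].
have Kop A B C D : K A B -> K C D -> K (A * C) (B * D).
  by move=> [pA pB AB] [pC pD CD]; split; [apply: pintegralM.. | exact: pcongM].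
move=> fg; have K1 : K 1 1 := And3 pintegral1 pintegral1 (pcong_refl r 1).
by case: (@big_ind2 _ _ K _ _ _ _ K1 Kop I s P f g fg).
Qed.

End PIntegral.

(* (q^2;q^2)_2k = (q;q)_2k (-q;q)_2k with (q;q)_2k = (q;q^2)_k (q^2;q^2)_k,
   and (q^4;q^4)_k = (q^2;q^2)_k (-q^2;q^2)_k. *)
Lemma qpoch_double_split (R : comNzRingType) (q0 : R) k :
  qpoch (q0 ^+ 2) (q0 ^+ 2) (2 * k) * qpoch (q0 ^+ 4) (q0 ^+ 4) k =
  qpoch q0 (q0 ^+ 2) k * qpoch (- q0 ^+ 2) (q0 ^+ 2) k * qpoch (- q0) q0 (2 * k)
  * qpoch (q0 ^+ 2) (q0 ^+ 2) k ^+ 2.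
Proof.
elim: k => [|k IH]; first by rewrite muln0 !qpoch0 expr1n !mulr1.
rewrite mulnS !qpochS.
transitivity (qpoch (q0 ^+ 2) (q0 ^+ 2) (2 * k) * qpoch (q0 ^+ 4) (q0 ^+ 4) k *
  ((1 - q0 ^+ 2 * (q0 ^+ 2) ^+ (2 * k)) * (1 - q0 ^+ 2 * (q0 ^+ 2) ^+ (2 * k).+1) *
   (1 - q0 ^+ 4 * (q0 ^+ 4) ^+ k))); first by ring.
rewrite IH (exprS (q0 ^+ 2) (2 * k)) (exprS q0 (2 * k)).
have -> : (q0 ^+ 2) ^+ (2 * k) = (q0 ^+ k) ^+ 4 by rewrite -!exprM; congr (_ ^+ _); lia.
have -> : (q0 ^+ 4) ^+ k = (q0 ^+ k) ^+ 4 by rewrite -!exprM; congr (_ ^+ _); lia.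
have -> : (q0 ^+ 2) ^+ k = (q0 ^+ k) ^+ 2 by rewrite exprAC.
have -> : q0 ^+ (2 * k) = (q0 ^+ k) ^+ 2 by rewrite mulnC exprM.
have -> : q0 ^+ 4 = (q0 ^+ 2) ^+ 2 by rewrite -exprM.
ring.
Qed.

Lemma summand_factor (F : fieldType) (q0 : F) s k : qgeneric q0 ->
  qbin (q0 ^+ 2) (2 * k) k ^+ 2 * qbin (q0 ^+ 2) (2 * k) (k + s) * q0 ^+ (2 * k)
  / (qpoch (- q0 ^+ 2) (q0 ^+ 2) k ^+ 2 * qpoch (- q0) q0 (2 * k) ^+ 2)
  = qpoch q0 (q0 ^+ 2) k ^+ 2 * binw (q0 ^+ 2) s k.
Proof.
move=> gq0; have gQ := qgenericX gq0 (isT : 0 < 2)%N.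
have le_k2k : (k <= 2 * k)%N by rewrite leq_pmull.
rewrite (qbinE gQ le_k2k) /binw -(exprM q0 2 k).
have -> : (2 * k - k = k)%N by lia.
have QQ0 := qpochQQ_neq0 gQ k.
have Q2Q20 := qpochQQ_neq0 (qgenericX gQ (isT : 0 < 2)%N) k.
have Q4Q40 := qpochQQ_neq0 (qgenericX gq0 (isT : 0 < 4)%N) k.
have NQ0 : qpoch (- q0 ^+ 2) (q0 ^+ 2) k != 0.
  by apply/prodf_neq0 => i _; rewrite mulNr opprK -exprS -exprM addr1Q_neq0 // muln_gt0.
have Nq0 : qpoch (- q0) q0 (2 * k) != 0.
  by apply/prodf_neq0 => i _; rewrite mulNr opprK -exprS addr1Q_neq0.
have -> : qpoch (q0 ^+ 2) (q0 ^+ 2) (2 * k) = qpoch q0 (q0 ^+ 2) k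
    * qpoch (- q0 ^+ 2) (q0 ^+ 2) k * qpoch (- q0) q0 (2 * k)
    * qpoch (q0 ^+ 2) (q0 ^+ 2) k ^+ 2 / qpoch (q0 ^+ 4) (q0 ^+ 4) k.
  by rewrite -qpoch_double_split mulfK.
have -> : q0 ^+ 4 = (q0 ^+ 2) ^+ 2 by rewrite -exprM.
by field; rewrite QQ0 Q2Q20 NQ0 Nq0.
Qed.

(* With a = q^(2n) and p = 2n + 1, the factor a q - 1 = q^p - 1 is divisible by [p]. *)
Lemma sqr_subr1_factor (F : fieldType) (q0 a w : F) : a != 0 ->
  (1 - q0 * w) ^+ 2 - (1 - a^-1 * w) * (1 - a * q0 ^+ 2 * w) = (a * q0 - 1) ^+ 2 * (w / a).
Proof. by move=> a0; field. Qed.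

Lemma qqX j : qq ^+ j = ('X^j : {poly rat})%:F.
Proof. by rewrite /qq tofracXn. Qed.

Lemma polyXn_neq1 j : (0 < j)%N -> ('X^j : {poly rat}) != 1.
Proof.
move=> j0; apply: contraTneq j0 => /(f_equal (fun P : {poly rat} => size P)).
by rewrite size_polyXn size_poly1 => -[->].
Qed.

Lemma qq_generic : qgeneric qq.
Proof.
split; first by rewrite /qq tofrac_eq0 polyX_eq0.
by move=> j j0; rewrite qqX -tofrac1 tofrac_eq polyXn_neq1.
Qed.

Lemma qint_subqq1 p : (qint p)%:F * (qq - 1) = qq ^+ p - 1.
Proof. by rewrite -[qq]expr1 !qqX -tofrac1 -!tofracB -tofracM mulrC mulX1_qint. Qed.

Section OddPrime.
Variable p : nat.
Hypotheses (p_pr : prime p) (p_odd : odd p).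

Lemma pintegral_qqX j : pintegral p (qq ^+ j).
Proof. by rewrite qqX; apply: pintegral_poly. Qed.

Lemma pintegral_qqV : pintegral p qq^-1.
Proof.
apply: pintegral_inv; first exact: coprimep_X_qint (prime_gt0 p_pr).
by rewrite polyX_eq0.
Qed.

Lemma pintegral_qpoch a Q m : pintegral p a -> pintegral p Q -> pintegral p (qpoch a Q m).
Proof.
move=> pa pQ; apply: pintegral_prod => i _.
by apply: pintegralB; [exact: pintegral1 | apply/pintegralM/pintegralX].
Qed.

Lemma pintegral_inv_subr1qq j : ~~ (p %| j)%N -> pintegral p (1 - qq ^+ j)^-1.
Proof.
move=> p_ndvd_j.
have j0 : (0 < j)%N by rewrite lt0n; apply: contraNneq p_ndvd_j => ->; rewrite dvdn0.
rewrite -opprB invrN qqX -tofrac1 -tofracB; apply/pintegralN/pintegral_inv.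
  exact: coprimep_Xn1_qint.
by rewrite subr_eq0 polyXn_neq1.
Qed.

Lemma odd_ndvd_mul c j : (c %| 4)%N -> (0 < j < p)%N -> ~~ (p %| c * j)%N.
Proof.
move=> c_dvd4 /andP[j0 lt_jp]; have cop_pc : coprime p c.
  by apply: coprime_dvdr c_dvd4 _; rewrite -[4%N]/(2 ^ 2)%N coprime_pexpr // coprimen2.
by rewrite Gauss_dvdr // gtnNdvd.
Qed.

Lemma pintegral_qpochV c m : (c %| 4)%N -> (m < p)%N ->
  pintegral p (qpoch (qq ^+ c) (qq ^+ c) m)^-1.
Proof.
move=> c_dvd4 lt_mp; rewrite /qpoch -prodfV; apply: pintegral_prod => i _.
rewrite -exprS -exprM; apply/pintegral_inv_subr1qq/odd_ndvd_mul => //.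
by rewrite /= (leq_ltn_trans (ltn_ord i)).
Qed.

Lemma pintegral_binw s k : (k + s < p)%N -> pintegral p (binw (qq ^+ 2) s k).
Proof.
move=> lt_ksp; rewrite /binw /qbin; case: ifP => _; last by rewrite !mul0r; apply: pintegral0.
rewrite -!exprM -exprVn; apply/pintegralM/pintegralX; last first.
  by apply: pintegral_qpochV => //; apply: leq_ltn_trans lt_ksp; apply: leq_addr.
apply/pintegralM/pintegral_qqX; apply/pintegralM; last exact: pintegral_qpochV.
by apply: pintegral_qpoch; apply: pintegral_qqX.
Qed.

Ltac pintegral_closure := repeat match goal with
  | H : pintegral _ ?x |- pintegral _ ?x => exact: H
  | |- pintegral _ 1 => exact: pintegral1
  | |- pintegral _ qq => exact: pintegral_poly
  | |- pintegral _ qq^-1 => exact: pintegral_qqV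
  | |- pintegral _ (qq ^+ _) => exact: pintegral_qqX
  | |- pintegral _ (_ ^+ _)^-1 => rewrite -exprVn
  | |- pintegral _ (_ * _) => apply: pintegralM
  | |- pintegral _ (_ - _) => apply: pintegralB
  | |- pintegral _ (_ ^+ _) => apply: pintegralX
  end.

Lemma pcong_qpoch_pair n k : p = n.*2.+1 ->
  pcong p 2 (qpoch qq (qq ^+ 2) k ^+ 2)
    (qpoch ((qq ^+ 2) ^+ n)^-1 (qq ^+ 2) k * qpoch ((qq ^+ 2) ^+ n.+1) (qq ^+ 2) k).
Proof.
move=> p_eq; rewrite /qpoch -prodrXl -big_split /=; apply: pcong_prod => i _.
split; try pintegral_closure.
exists ((qq - 1) ^+ 2 * ((qq ^+ 2) ^+ i / (qq ^+ 2) ^+ n)); first by pintegral_closure.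
rewrite (exprSr (qq ^+ 2) n) sqr_subr1_factor ?expf_neq0 ?qq_generic.1 //.
by rewrite -(exprM qq 2 n) -exprSr mul2n -p_eq -qint_subqq1 exprMn rmorphXn !mulrA.
Qed.

Lemma pcong_summand n s k : p = n.*2.+1 -> (k <= n)%N -> (s <= n)%N ->
  pcong p 2
    (qbin (qq ^+ 2) (2 * k) k ^+ 2 * qbin (qq ^+ 2) (2 * k) (k + s) * qq ^+ (2 * k)
      / (qpoch (- qq ^+ 2) (qq ^+ 2) k ^+ 2 * qpoch (- qq) qq (2 * k) ^+ 2))
    (summand (qq ^+ 2) n s k).
Proof.
move=> p_eq le_kn le_sn; rewrite (summand_factor s k qq_generic) /summand.
by apply: pcongMr; [apply: pintegral_binw; lia | exact: pcong_qpoch_pair].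
Qed.

End OddPrime.

Lemma closed_formE p n s : p = n.*2.+1 -> (s <= n)%N ->
  closed_form qq n s =
    (-1) ^+ s * qq ^ ((n%N)%:Z - (s * s)%N%:Z)
    * qbin (qq ^+ 4) n ((p - 2 * s - 1) %/ 4) ^+ 2
    * (qpoch (qq ^+ 2) (qq ^+ 2) ((p - 2 * s - 1) %/ 2)
       * qpoch (qq ^+ 2) (qq ^+ 2) ((p + 2 * s - 1) %/ 2))
    / qpoch (qq ^+ 4) (qq ^+ 4) n ^+ 2.
Proof.
move=> p_eq le_sn.
have -> : ((p - 2 * s - 1) %/ 4 = (n - s) %/ 2)%N by rewrite p_eq; lia.
have -> : ((p - 2 * s - 1) %/ 2 = n - s)%N by rewrite p_eq; lia.
have -> : ((p + 2 * s - 1) %/ 2 = n + s)%N by rewrite p_eq; lia.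
by rewrite /closed_form expfzDr ?qq_generic.1 // -invr_expz.
Qed.

Unset Implicit Arguments.

Theorem theorem2p1 (p s : nat) (hp : prime p) (hodd : odd p)
    (hs : (s <= (p - 1) %/ 2)%N) :
  qcong p 2
    (\sum_(k < ((p - 1) %/ 2).+1)
        qbin (qq ^+ 2) (2 * k) k ^+ 2 * qbin (qq ^+ 2) (2 * k) (k + s)
        * qq ^+ (2 * k)
        / (qpoch (- qq ^+ 2) (qq ^+ 2) k ^+ 2 * qpoch (- qq) qq (2 * k) ^+ 2))
    (if odd s == odd ((p - 1) %/ 2) then
       (-1) ^+ s * qq ^ ((((p - 1) %/ 2)%N)%:Z - (s * s)%N%:Z)
       * qbin (qq ^+ 4) ((p - 1) %/ 2) ((p - 2 * s - 1) %/ 4) ^+ 2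
       * (qpoch (qq ^+ 2) (qq ^+ 2) ((p - 2 * s - 1) %/ 2)
          * qpoch (qq ^+ 2) (qq ^+ 2) ((p + 2 * s - 1) %/ 2))
       / qpoch (qq ^+ 4) (qq ^+ 4) ((p - 1) %/ 2) ^+ 2
     else 0).
Proof.
set n := ((p - 1) %/ 2)%N.
have p_eq : p = n.*2.+1 by have := modn2 p; rewrite hodd /n; lia.
rewrite -(closed_formE p_eq hs) -(qsum_closed_form qq_generic hs).
apply/pcong_qcong/pcong_sum => k _.
exact: (pcong_summand hp hodd p_eq (ltn_ord k) hs).
Qed.
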